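(* Let $k\in\{1,2,\dots\}\cup\{\infty\}$ and $a,b>0$ with $a,b\neq1$. Then $D^k(\mathbb{R},0)\cap w_b\,D^k(\mathbb{R},0)\,w_a$ equals $\varnothing$ if $a\neq b$ and $a\neq 1/b$; equals $E^{k,+}(\mathbb{R},0)$ if $ab=1$; and equals $E^{k,-}(\mathbb{R},0)$ if $a=b$.
   Context: $D^k(\mathbb{R},0)$ is the group of $C^k$-diffeomorphisms of $\mathbb{R}$ fixing $0$. $E^k(\mathbb{R},0)$ is its subgroup of $h$ with $h^{(i)}(0)=0$ for all integers $2\le i\le k$ (all $i\ge2$ if $k=\infty$); $E^{k,+}(\mathbb{R},0)$ and $E^{k,-}(\mathbb{R},0)$ denote its orientation preserving and orientation reversing elements. For $c>0$, $w_c\colon\mathbb{R}\to\mathbb{R}$ is the homeomorphism $w_c(x)=x$ for $x\le0$, $w_c(x)=cx$ for $x>0$, and $w_bDw_a=\{w_b\circ f\circ w_a: f\in D^k(\mathbb{R},0)\}$. *)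

From Stdlib Require Import Reals.
From Coquelicot Require Import Coquelicot.
Open Scope R_scope.

(* Smoothness class k in {1,2,...} ∪ {∞}: Fin n (n >= 1 required separately) or Inf. *)
Inductive smoothness := Fin (n : nat) | Inf.

Definition valid_smoothness (k : smoothness) : Prop :=
  match k with Fin n => (1 <= n)%nat | Inf => True end.

Definition le_k (i : nat) (k : smoothness) : Prop :=
  match k with Fin n => (i <= n)%nat | Inf => True end.

Definition Ck (k : smoothness) (f : R -> R) : Prop :=
  forall i : nat, le_k i k ->
    (forall x, ex_derive_n f i x) /\ (forall x, continuous (Derive_n f i) x).

Definition Ck_diffeo (k : smoothness) (h : R -> R) : Prop :=
  Ck k h /\ exists g : R -> R,
    (forall x, g (h x) = x) /\ (forall y, h (g y) = y) /\ Ck k g.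

Definition Dk (k : smoothness) (h : R -> R) : Prop :=
  Ck_diffeo k h /\ h 0 = 0.

Definition Ek (k : smoothness) (h : R -> R) : Prop :=
  Dk k h /\ forall i : nat, (2 <= i)%nat -> le_k i k -> Derive_n h i 0 = 0.

Definition orientation_preserving (h : R -> R) : Prop :=
  forall x y, x < y -> h x < h y.
Definition orientation_reversing (h : R -> R) : Prop :=
  forall x y, x < y -> h y < h x.

Definition Ek_plus (k : smoothness) (h : R -> R) : Prop :=
  Ek k h /\ orientation_preserving h.
Definition Ek_minus (k : smoothness) (h : R -> R) : Prop :=
  Ek k h /\ orientation_reversing h.

Definition w (c : R) (x : R) : R := if Rle_dec x 0 then x else c * x.

Definition in_wDw (k : smoothness) (b a : R) (h : R -> R) : Prop :=
  exists f : R -> R, Dk k f /\ h = (fun x => w b (f (w a x))).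

From Stdlib Require Import Reals Lra Lia Factorial FunctionalExtensionality.
From Coquelicot Require Import Coquelicot.
Open Scope R_scope.

(* A C^k diffeomorphism f of R fixing 0 is strictly monotone, so w_b f w_a is a
   rescaled copy of f on each side of 0: if f increases it is f on x <= 0 and
   x |-> b f(a x) on x > 0; if f decreases it is b f on x <= 0 and x |-> f(a x) on
   x > 0.  When h = w_b f w_a is C^k, its i-th derivative at 0 computed from both
   sides gives f^(i)(0) = b a^i f^(i)(0), resp. b f^(i)(0) = a^i f^(i)(0).  For
   i = 1, as f'(0) <> 0, this forces ab = 1, resp. a = b; for i >= 2 and a <> 1 it
   forces f^(i)(0) = 0, hence h^(i)(0) = 0.
   Conversely, if h is flat at 0 the same gluing of rescaled copies of h and of
   h^-1 is C^k, which writes h as w_b f w_a with f in D^k.  This needs h^-1 to be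
   flat as well: by Taylor's formula, flatness up to order n is equivalent to
   f(x) - f(0) - f'(0) x = o(|x|^n), and that property passes to the inverse. *)

Lemma le_k_trans m i k : (m <= i)%nat -> le_k i k -> le_k m k.
Proof. destruct k; simpl; lia. Qed.

Lemma le_k_S i k : le_k (S i) k -> le_k i k.
Proof. exact (le_k_trans i (S i) k (Nat.le_succ_diag_r i)). Qed.

Lemma le_k_1 k : valid_smoothness k -> le_k 1 k.
Proof. destruct k; simpl; auto. Qed.

Lemma Ck_Fin k n f : Ck k f -> le_k n k -> Ck (Fin n) f.
Proof. intros Hf Hn i Hi. apply Hf. exact (le_k_trans i n k Hi Hn). Qed.

Lemma Ck_ex_derive k f x : valid_smoothness k -> Ck k f -> ex_derive f x.
Proof. intros Hk Hf. exact (proj1 (Hf 1%nat (le_k_1 k Hk)) x). Qed.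

Lemma locally_Rabs x (P : R -> Prop) :
  locally x P <-> exists d, 0 < d /\ forall y, Rabs (y - x) < d -> P y.
Proof.
  split.
  - intros [d Hd]. exists d. split; [apply cond_pos | exact Hd].
  - intros [d [Hd HP]]. exists (mkposreal d Hd). exact HP.
Qed.

Lemma locally_0_small (d : posreal) : locally 0 (fun x => Rabs x < d).
Proof. exists d. intros y Hy. rewrite <- (Rminus_0_r y). exact Hy. Qed.

Lemma continuous_near (f : R -> R) (x : R) (eps : posreal) :
  continuous f x -> locally x (fun y => Rabs (f y - f x) < eps).
Proof. intros Hf. exact (proj1 (filterlim_locally f (f x)) Hf eps). Qed.

Lemma is_derive_near (f : R -> R) (x l : R) (eps : posreal) :
  is_derive f x l -> locally x (fun y => Rabs (f y - f x - (y - x) * l) <= eps * Rabs (y - x)).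
Proof. intros [_ Hf]. exact (Hf x (fun P HP => HP) eps). Qed.

Definition glue (u v : R -> R) (x : R) : R := if Rle_dec x 0 then u x else v x.

Lemma glue_l u v x : x <= 0 -> glue u v x = u x.
Proof. intros H. unfold glue. destruct (Rle_dec x 0); [reflexivity | lra]. Qed.

Lemma glue_r u v x : 0 < x -> glue u v x = v x.
Proof. intros H. unfold glue. destruct (Rle_dec x 0); [lra | reflexivity]. Qed.

Lemma glue_locally_l u v x : x < 0 -> locally x (fun t => u t = glue u v t).
Proof.
  intros Hx. apply (filter_imp (fun t => t < 0)); [intros t Ht; symmetry; apply glue_l; lra |].
  exact (open_lt 0 x Hx).
Qed.

Lemma glue_locally_r u v x : 0 < x -> locally x (fun t => v t = glue u v t).
Proof.
  intros Hx. apply (filter_imp (fun t => 0 < t)); [intros t Ht; symmetry; apply glue_r; lra |].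
  exact (open_gt 0 x Hx).
Qed.

Lemma glue_continuous u v x :
  continuous u x -> continuous v x -> u 0 = v 0 -> continuous (glue u v) x.
Proof.
  intros Hu Hv H0. destruct (Rtotal_order x 0) as [Hx | [-> | Hx]].
  - exact (continuous_ext_loc _ _ x (glue_locally_l u v x Hx) Hu).
  - apply filterlim_locally. intros eps.
    generalize (filter_and _ _ (continuous_near u 0 eps Hu) (continuous_near v 0 eps Hv)).
    apply filter_imp. intros t [Ht1 Ht2]. change (Rabs (glue u v t - glue u v 0) < eps).
    rewrite (glue_l u v 0) by lra. unfold glue. destruct (Rle_dec t 0); [| rewrite H0]; assumption.
  - exact (continuous_ext_loc _ _ x (glue_locally_r u v x Hx) Hv).
Qed.

Lemma glue_is_derive u v u' v' x :
  is_derive u x (u' x) -> is_derive v x (v' x) -> u 0 = v 0 -> u' 0 = v' 0 ->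
  is_derive (glue u v) x (glue u' v' x).
Proof.
  intros Hu Hv H0 H0'. destruct (Rtotal_order x 0) as [Hx | [-> | Hx]].
  - rewrite glue_l by lra. exact (is_derive_ext_loc _ _ x _ (glue_locally_l u v x Hx) Hu).
  - split; [apply is_linear_scal_l |]. intros y Hy eps.
    apply (@is_filter_lim_locally_unique _ R_NormedModule) in Hy. subst y.
    change (locally 0 (fun t => Rabs (glue u v t - glue u v 0 - (t - 0) * glue u' v' 0)
                                <= eps * Rabs (t - 0))).
    rewrite !glue_l by lra.
    generalize (filter_and _ _ (is_derive_near u 0 _ eps Hu) (is_derive_near v 0 _ eps Hv)).
    apply filter_imp. intros t [Ht1 Ht2].
    unfold glue. destruct (Rle_dec t 0); [| rewrite H0, H0']; assumption.
  - rewrite glue_r by lra. exact (is_derive_ext_loc _ _ x _ (glue_locally_r u v x Hx) Hv).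
Qed.

Lemma glue_Ck k u v : Ck k u -> Ck k v ->
  (forall i, le_k i k -> Derive_n u i 0 = Derive_n v i 0) -> Ck k (glue u v).
Proof.
  intros Hu Hv H0.
  assert (Hder : forall i, le_k (S i) k -> forall x,
    is_derive (glue (Derive_n u i) (Derive_n v i)) x
      (glue (Derive_n u (S i)) (Derive_n v (S i)) x)).
  { intros i Hi x. apply glue_is_derive.
    - exact (Derive_correct _ _ (proj1 (Hu (S i) Hi) x)).
    - exact (Derive_correct _ _ (proj1 (Hv (S i) Hi) x)).
    - exact (H0 i (le_k_S i k Hi)).
    - exact (H0 (S i) Hi). }
  assert (HD : forall i, le_k i k -> forall x,
    Derive_n (glue u v) i x = glue (Derive_n u i) (Derive_n v i) x).
  { induction i as [|i IH]; intros Hi x; [reflexivity |].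
    simpl. rewrite (Derive_ext _ _ x (IH (le_k_S i k Hi))).
    exact (is_derive_unique _ _ _ (Hder i Hi x)). }
  intros i Hi. split; intros x.
  - destruct i as [|i]; [exact I |].
    apply (ex_derive_ext (glue (Derive_n u i) (Derive_n v i))).
    + intros t. symmetry. exact (HD i (le_k_S i k Hi) t).
    + eexists. exact (Hder i Hi x).
  - apply (continuous_ext (glue (Derive_n u i) (Derive_n v i))).
    + intros t. symmetry. exact (HD i Hi t).
    + apply glue_continuous; [apply Hu | apply Hv | apply H0]; exact Hi.
Qed.

Lemma continuous_agree_at_left (P Q : R -> R) x :
  continuous P x -> continuous Q x -> at_left x (fun t => P t = Q t) -> P x = Q x.
Proof.
  intros HP HQ H. apply (filterlim_locally_unique (F := at_left x) Q).
  - apply (filterlim_ext_loc P Q H).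
    exact (filterlim_filter_le_1 _ (filter_le_within (F := locally x) _) HP).
  - exact (filterlim_filter_le_1 _ (filter_le_within (F := locally x) _) HQ).
Qed.

Lemma continuous_agree_at_right (P Q : R -> R) x :
  continuous P x -> continuous Q x -> at_right x (fun t => P t = Q t) -> P x = Q x.
Proof.
  intros HP HQ H. apply (filterlim_locally_unique (F := at_right x) Q).
  - apply (filterlim_ext_loc P Q H).
    exact (filterlim_filter_le_1 _ (filter_le_within (F := locally x) _) HP).
  - exact (filterlim_filter_le_1 _ (filter_le_within (F := locally x) _) HQ).
Qed.

Lemma Derive_n_0_agree_left k f u i : Ck k f -> Ck k u -> le_k i k ->
  (forall t, t < 0 -> f t = u t) -> Derive_n f i 0 = Derive_n u i 0.
Proof.
  intros Hf Hu Hi Hfu. apply continuous_agree_at_left; [apply Hf, Hi | apply Hu, Hi |].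
  apply (filter_forall (F := locally 0)). intros t Ht. apply Derive_n_ext_loc.
  apply (filter_imp (fun s => s < 0)); [exact Hfu | exact (open_lt 0 t Ht)].
Qed.

Lemma Derive_n_0_agree_right k f v i : Ck k f -> Ck k v -> le_k i k ->
  (forall t, 0 < t -> f t = v t) -> Derive_n f i 0 = Derive_n v i 0.
Proof.
  intros Hf Hv Hi Hfv. apply continuous_agree_at_right; [apply Hf, Hi | apply Hv, Hi |].
  apply (filter_forall (F := locally 0)). intros t Ht. apply Derive_n_ext_loc.
  apply (filter_imp (fun s => 0 < s)); [exact Hfv | exact (open_gt 0 t Ht)].
Qed.

Definition rescale (c d : R) (f : R -> R) (x : R) : R := c * f (d * x).

Lemma Derive_n_rescale k f c d i x : Ck k f -> le_k i k ->
  Derive_n (rescale c d f) i x = c * d ^ i * Derive_n f i (d * x).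
Proof.
  intros Hf Hi. unfold rescale.
  rewrite Derive_n_scal_l, Derive_n_comp_scal, Rmult_assoc; [reflexivity |].
  apply filter_forall. intros t m Hm. apply Hf. exact (le_k_trans m i k Hm Hi).
Qed.

Lemma Ck_rescale k f c d : Ck k f -> Ck k (rescale c d f).
Proof.
  intros Hf i Hi. split; intros x.
  - apply ex_derive_n_scal_l, ex_derive_n_comp_scal.
    apply filter_forall. intros t m Hm. apply Hf. exact (le_k_trans m i k Hm Hi).
  - apply (continuous_ext (fun y => c * d ^ i * Derive_n f i (d * y))).
    + intros y. symmetry. exact (Derive_n_rescale k f c d i y Hf Hi).
    + apply (continuous_mult (fun _ => c * d ^ i) (fun y => Derive_n f i (d * y)));
        [apply continuous_const |].
      apply (continuous_comp (fun y => d * y)); [| apply Hf, Hi].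
      apply (continuous_mult (fun _ => d) (fun y => y));
        [apply continuous_const | apply continuous_id].
Qed.

Lemma w_l c x : x <= 0 -> w c x = x.
Proof. intros H. unfold w. destruct (Rle_dec x 0); [reflexivity | lra]. Qed.

Lemma w_r c x : 0 < x -> w c x = c * x.
Proof. intros H. unfold w. destruct (Rle_dec x 0); [lra | reflexivity]. Qed.

Lemma w_increasing c : 0 < c -> orientation_preserving (w c).
Proof.
  intros Hc x y Hxy. destruct (Rle_lt_dec x 0), (Rle_lt_dec y 0).
  - rewrite !w_l; lra.
  - rewrite w_l, w_r by lra. nra.
  - lra.
  - rewrite !w_r by lra. nra.
Qed.

Lemma w_inv c x : 0 < c -> w (/ c) (w c x) = x.
Proof.
  intros Hc. destruct (Rle_lt_dec x 0).
  - rewrite (w_l c x), w_l by assumption. reflexivity.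
  - rewrite (w_r c x), w_r by nra. field. lra.
Qed.

Lemma w_conj_preserving f c d x : f 0 = 0 -> orientation_preserving f -> 0 < d ->
  w c (f (w d x)) = glue (rescale 1 1 f) (rescale c d f) x.
Proof.
  intros f0 Hf Hd. unfold rescale. destruct (Rle_lt_dec x 0) as [Hx | Hx].
  - assert (f x <= 0).
    { destruct (Rle_lt_or_eq_dec x 0 Hx) as [Hx' | ->]; [specialize (Hf x 0 Hx') |]; lra. }
    rewrite glue_l, (w_l d x), w_l, !Rmult_1_l by assumption. reflexivity.
  - assert (0 < f (d * x)) by (rewrite <- f0; apply Hf; nra).
    rewrite glue_r, (w_r d x), w_r by assumption. reflexivity.
Qed.

Lemma w_conj_reversing f c d x : f 0 = 0 -> orientation_reversing f -> 0 < d ->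
  w c (f (w d x)) = glue (rescale c 1 f) (rescale 1 d f) x.
Proof.
  intros f0 Hf Hd. unfold rescale. destruct (Rle_lt_dec x 0) as [Hx | Hx].
  - rewrite glue_l, (w_l d x), Rmult_1_l by assumption.
    destruct (Rle_lt_or_eq_dec x 0 Hx) as [Hx' | ->].
    + apply w_r. rewrite <- f0. exact (Hf x 0 Hx').
    + rewrite f0, w_l by lra. ring.
  - assert (f (d * x) < 0) by (rewrite <- f0; apply Hf; nra).
    rewrite glue_r, (w_r d x), w_l, Rmult_1_l by lra. reflexivity.
Qed.

Lemma Derive_inverse f g x : ex_derive f x -> ex_derive g (f x) ->
  (forall x, g (f x) = x) -> Derive g (f x) * Derive f x = 1.
Proof.
  intros Hf Hg Hgf.
  assert (Hid : is_derive (fun t => t) x (Derive f x * Derive g (f x))).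
  { apply (is_derive_ext (fun t => g (f t))); [exact Hgf |].
    exact (is_derive_comp g f x _ _ (Derive_correct _ _ Hg) (Derive_correct _ _ Hf)). }
  rewrite Rmult_comm, <- (is_derive_unique _ _ _ Hid). apply Derive_id.
Qed.

Lemma monotone_of_Derive_neq_0 f : (forall x, ex_derive f x) ->
  (forall x, continuous (Derive f) x) -> (forall x, Derive f x <> 0) ->
  orientation_preserving f \/ orientation_reversing f.
Proof.
  intros Hf Hc Hne.
  assert (Hsign : forall x, 0 < Derive f x * Derive f 0).
  { intros x. destruct (Rlt_le_dec 0 (Derive f x * Derive f 0)) as [Hpos | Hneg]; [exact Hpos |].
    destruct (IVT_gen_consistent (Derive f) x 0 0 Hc) as [z [_ Hz]]; [| now destruct (Hne z)].
    unfold Rmin, Rmax. destruct (Rle_dec (Derive f x) (Derive f 0)); split; nra. }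
  destruct (Rlt_le_dec 0 (Derive f 0)) as [Hpos | Hneg]; [left | right]; intros x y Hxy.
  - apply (incr_function f m_infty p_infty (Derive f)); simpl; auto.
    + intros t _ _. exact (Derive_correct _ _ (Hf t)).
    + intros t _ _. specialize (Hsign t). nra.
  - assert (Derive f 0 < 0) by (specialize (Hne 0); lra).
    enough (- f x < - f y) by lra.
    apply (incr_function (fun t => - f t) m_infty p_infty (fun t => - Derive f t)); simpl; auto.
    + intros t _ _. exact (is_derive_opp _ _ _ (Derive_correct _ _ (Hf t))).
    + intros t _ _. specialize (Hsign t). nra.
Qed.

Lemma Dk_Derive_neq_0 k f x : valid_smoothness k -> Dk k f -> Derive f x <> 0.
Proof.
  intros Hk [[Hf [g [Hgf [_ Hg]]]] _] E.
  assert (H := Derive_inverse f g x (Ck_ex_derive k f x Hk Hf) (Ck_ex_derive k g (f x) Hk Hg) Hgf).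
  rewrite E in H. lra.
Qed.

Lemma Dk_monotone k f : valid_smoothness k -> Dk k f ->
  orientation_preserving f \/ orientation_reversing f.
Proof.
  intros Hk Hf. pose proof (proj1 (proj1 Hf)) as Cf.
  apply monotone_of_Derive_neq_0.
  - intros x. exact (Ck_ex_derive k f x Hk Cf).
  - intros x. exact (proj2 (Cf 1%nat (le_k_1 k Hk)) x).
  - intros x. exact (Dk_Derive_neq_0 k f x Hk Hf).
Qed.

Definition flat (k : smoothness) (h : R -> R) : Prop :=
  forall i, (2 <= i)%nat -> le_k i k -> Derive_n h i 0 = 0.

Definition flat_upto (n : nat) (f : R -> R) : Prop :=
  forall m, (2 <= m <= n)%nat -> Derive_n f m 0 = 0.

Definition tangent_contact (n : nat) (f : R -> R) : Prop :=
  forall eps : posreal, locally 0 (fun x => Rabs (f x - f 0 - Derive f 0 * x) <= eps * Rabs x ^ n).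

Lemma Taylor_Lagrange_flat_pos n f x : 0 < x ->
  (forall m t, (m <= S (S n))%nat -> ex_derive_n f m t) -> flat_upto (S n) f ->
  exists z, 0 < z < x /\
    f x - f 0 - Derive f 0 * x = x ^ S (S n) / INR (fact (S (S n))) * Derive_n f (S (S n)) z.
Proof.
  intros Hx Hf Hflat.
  destruct (Taylor_Lagrange f (S n) 0 x Hx) as [z [Hz E]]; [intros t _ m Hm; apply Hf, Hm |].
  exists z. split; [exact Hz |].
  assert (Hsum : forall j, (j <= n)%nat ->
    sum_f_R0 (fun m => (x - 0) ^ m / INR (fact m) * Derive_n f m 0) (S j) = f 0 + x * Derive f 0).
  { induction j as [|j IH]; intros Hj.
    - simpl. unfold Rdiv. rewrite Rinv_1. change (Derive (fun t => f t) 0) with (Derive f 0). ring.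
    - rewrite tech5, IH, Hflat by lia. ring. }
  rewrite E, Hsum, Rminus_0_r by lia. ring.
Qed.

Lemma Taylor_Lagrange_flat n f x : x <> 0 ->
  (forall m t, (m <= S (S n))%nat -> ex_derive_n f m t) -> flat_upto (S n) f ->
  exists z, Rabs z < Rabs x /\
    f x - f 0 - Derive f 0 * x = x ^ S (S n) / INR (fact (S (S n))) * Derive_n f (S (S n)) z.
Proof.
  intros Hx Hf Hflat. destruct (Rtotal_order x 0) as [Hneg | [Hzero | Hpos]]; [| contradiction |].
  - set (g := fun t => f (- t)).
    assert (Hg : forall m t, (m <= S (S n))%nat -> Derive_n g m t = (-1) ^ m * Derive_n f m (- t)).
    { intros m t Hm. apply Derive_n_comp_opp, filter_forall. intros s j Hj. apply Hf. lia. }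
    destruct (Taylor_Lagrange_flat_pos n g (- x)) as [z [Hz E]]; [lra | | |].
    + intros m t Hm. apply ex_derive_n_comp_opp, filter_forall. intros s j Hj. apply Hf. lia.
    + intros m Hm. rewrite Hg, Ropp_0, Hflat by lia. ring.
    + exists (- z). split; [rewrite !Rabs_left; lra |].
      change (Derive g 0) with (Derive_n g 1 0) in E. rewrite !Hg in E by lia.
      unfold g in E. rewrite Ropp_involutive, Ropp_0 in E.
      replace (x ^ S (S n)) with ((- x) ^ S (S n) * (-1) ^ S (S n))
        by (rewrite <- Rpow_mult_distr; f_equal; ring).
      change (Derive f 0) with (Derive_n f 1 0).
      transitivity (f x - f 0 - (-1) ^ 1 * Derive_n f 1 0 * - x); [ring |].
      rewrite E. unfold Rdiv. ring.
  - destruct (Taylor_Lagrange_flat_pos n f x Hpos Hf Hflat) as [z [Hz E]].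
    exists z. split; [rewrite !Rabs_right; lra | exact E].
Qed.

Lemma tangent_contact_of_flat_upto n f : (2 <= n)%nat -> Ck (Fin n) f -> flat_upto n f ->
  tangent_contact n f.
Proof.
  intros Hn Hf Hflat eps. destruct n as [|[|n]]; [lia | lia |].
  assert (Hc := continuous_near _ 0 eps (proj2 (Hf _ (le_n _)) 0)).
  rewrite (Hflat (S (S n))) in Hc by lia.
  apply locally_Rabs in Hc as [d [Hd Hc]]. apply locally_Rabs. exists d. split; [exact Hd |].
  intros x Hx. rewrite Rminus_0_r in Hx.
  destruct (Req_dec x 0) as [-> | Hx0].
  - rewrite Rabs_R0, pow_i by lia. replace (f 0 - f 0 - Derive f 0 * 0) with 0 by ring.
    rewrite Rabs_R0. lra.
  - destruct (Taylor_Lagrange_flat n f x Hx0) as [z [Hz ->]].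
    + intros m t Hm. exact (proj1 (Hf m Hm) t).
    + intros m Hm. apply Hflat. lia.
    + assert (Hdz : Rabs (Derive_n f (S (S n)) z) < eps).
      { rewrite <- (Rminus_0_r (Derive_n f _ z)). apply Hc. rewrite Rminus_0_r. lra. }
      assert (HF : 0 < / INR (fact (S (S n))) <= 1).
      { split; [apply Rinv_0_lt_compat, INR_fact_lt_0 |].
        rewrite <- Rinv_1. apply Rinv_le_contravar; [lra | apply (le_INR 1), lt_O_fact]. }
      assert (HX := pow_le _ (S (S n)) (Rabs_pos x)).
      assert (HD := Rabs_pos (Derive_n f (S (S n)) z)).
      unfold Rdiv. rewrite !Rabs_mult, <- RPow_abs, (Rabs_pos_eq (/ _)) by lra.
      set (X := Rabs x ^ S (S n)) in *. set (Y := Rabs (Derive_n f (S (S n)) z)) in *.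
      set (I := / INR (fact (S (S n)))) in *.
      assert (I * Y <= eps) by nra. rewrite (Rmult_comm eps), Rmult_assoc.
      apply Rmult_le_compat_l; lra.
Qed.

Lemma tangent_contact_weaken n f : tangent_contact (S n) f -> tangent_contact n f.
Proof.
  intros Hf eps. generalize (filter_and _ _ (Hf eps) (locally_0_small (mkposreal 1 Rlt_0_1))).
  apply filter_imp. intros x [Hx Hx1]. simpl in Hx1.
  apply (Rle_trans _ _ _ Hx), Rmult_le_compat_l; [apply Rlt_le, cond_pos |].
  simpl. rewrite <- (Rmult_1_l (Rabs x ^ n)) at 2.
  apply Rmult_le_compat_r; [apply pow_le, Rabs_pos | lra].
Qed.

Lemma Derive_n_0_of_tangent_contact n f : Ck (Fin (S (S n))) f -> flat_upto (S n) f ->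
  tangent_contact (S (S n)) f -> Derive_n f (S (S n)) 0 = 0.
Proof.
  (* If D <> 0, Taylor-Lagrange at a small x > 0 gives a remainder x^N/N! f^(N)(z)
     with |f^(N)(z)| > |D|/2, too large for contact of order N. *)
  intros Hf Hflat Hc. set (N := S (S n)). set (D := Derive_n f N 0).
  destruct (Req_dec D 0) as [| HD]; [assumption | exfalso].
  apply Rabs_pos_lt in HD.
  set (I := / INR (fact N)). assert (HI : 0 < I) by apply Rinv_0_lt_compat, INR_fact_lt_0.
  assert (HD2 : 0 < Rabs D / 2) by lra.
  assert (He : 0 < Rabs D / 2 * I) by nra.
  destruct (proj1 (locally_Rabs _ _) (filter_and _ _
    (continuous_near _ 0 (mkposreal _ HD2) (proj2 (Hf N (le_n _)) 0)) (Hc (mkposreal _ He))))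
    as [d [Hd Hnear]].
  cbn [pos] in Hnear. fold D in Hnear.
  destruct (Taylor_Lagrange_flat_pos n f (d / 2)) as [z [Hz E]];
    [lra | intros m t Hm; exact (proj1 (Hf m Hm) t) | exact Hflat |].
  destruct (Hnear z) as [Hz1 _]; [rewrite Rminus_0_r, Rabs_pos_eq; lra |].
  destruct (Hnear (d / 2)) as [_ Hx]; [rewrite Rminus_0_r, Rabs_pos_eq; lra |].
  assert (Hlow : Rabs D / 2 < Rabs (Derive_n f N z)).
  { rewrite Rabs_minus_sym in Hz1. assert (H := Rabs_triang_inv D (Derive_n f N z)). lra. }
  assert (HXI : 0 < (d / 2) ^ N * I) by (apply Rmult_lt_0_compat; [apply pow_lt |]; lra).
  fold N in E. change ((d / 2) ^ N / INR (fact N)) with ((d / 2) ^ N * I) in E.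
  rewrite E, (Rabs_pos_eq (d / 2)), Rabs_mult, (Rabs_pos_eq (_ * I)) in Hx by lra.
  fold N in Hx. nra.
Qed.

Lemma flat_upto_of_tangent_contact n f : Ck (Fin n) f -> tangent_contact n f -> flat_upto n f.
Proof.
  induction n as [|n IH]; intros Hf Hc m Hm; [lia |].
  assert (Hlow : flat_upto n f).
  { apply IH; [exact (Ck_Fin (Fin (S n)) n f Hf (Nat.le_succ_diag_r n)) |].
    exact (tangent_contact_weaken n f Hc). }
  destruct (Nat.eq_dec m (S n)) as [-> | Hne]; [| apply Hlow; lia].
  destruct n as [|n]; [lia |]. exact (Derive_n_0_of_tangent_contact n f Hf Hlow Hc).
Qed.

Lemma tangent_contact_inverse n f g :
  f 0 = 0 -> (forall x, g (f x) = x) -> (forall y, f (g y) = y) ->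
  ex_derive f 0 -> ex_derive g 0 -> tangent_contact n f -> tangent_contact n g.
Proof.
  (* For x = g y, which is O(y): g y - g'(0) y = - g'(0) (f x - f'(0) x). *)
  intros f0 Hgf Hfg Hf Hg Hc eps.
  assert (g0 : g 0 = 0) by (rewrite <- f0 at 1; apply Hgf).
  assert (Hinv : Derive g 0 * Derive f 0 = 1).
  { assert (H := Derive_inverse f g 0 Hf). rewrite f0 in H. exact (H Hg Hgf). }
  set (c := Derive f 0) in *. set (c' := Derive g 0) in *. set (K := Rabs c' + 1).
  assert (Hc' : 0 < Rabs c') by (apply Rabs_pos_lt; intros E; rewrite E in Hinv; lra).
  assert (HK : 0 < K) by (unfold K; lra).
  assert (He : 0 < eps / (Rabs c' * K ^ n)).
  { apply Rdiv_lt_0_compat; [apply cond_pos | apply Rmult_lt_0_compat; [lra | apply pow_lt; lra]]. }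
  assert (Hlin : locally 0 (fun y => Rabs (g y) <= K * Rabs y)).
  { generalize (is_derive_near g 0 c' (mkposreal 1 Rlt_0_1) (Derive_correct _ _ Hg)).
    apply filter_imp. intros y Hy. cbn [pos] in Hy. rewrite g0, !Rminus_0_r in Hy.
    unfold K. assert (H := Rabs_triang_inv (g y) (y * c')). rewrite Rabs_mult in H. nra. }
  assert (Hcont : filterlim g (locally 0) (locally 0)).
  { rewrite <- g0 at 2. exact (ex_derive_continuous g 0 Hg). }
  generalize (filter_and _ _ Hlin (Hcont _ (Hc (mkposreal _ He)))).
  apply filter_imp. intros y [Hy1 Hy2]. cbn [pos] in Hy2. rewrite Hfg, f0 in Hy2. fold c in Hy2.
  assert (E : g y - g 0 - c' * y = - c' * (y - 0 - c * g y)).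
  { rewrite g0. transitivity ((c' * c) * g y - c' * y); [rewrite Hinv |]; ring. }
  assert (Hpow : Rabs (g y) ^ n <= K ^ n * Rabs y ^ n).
  { rewrite <- Rpow_mult_distr. apply pow_incr. split; [apply Rabs_pos | exact Hy1]. }
  rewrite E, Rabs_mult, Rabs_Ropp.
  apply (Rle_trans _ (Rabs c' * (eps / (Rabs c' * K ^ n) * (K ^ n * Rabs y ^ n)))).
  - apply Rmult_le_compat_l; [lra |].
    apply (Rle_trans _ _ _ Hy2), Rmult_le_compat_l; [lra | exact Hpow].
  - right. field. split; [apply pow_nonzero |]; lra.
Qed.

Lemma flat_inverse k f g : valid_smoothness k -> Ck k f -> Ck k g -> f 0 = 0 ->
  (forall x, g (f x) = x) -> (forall y, f (g y) = y) -> flat k f -> flat k g.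
Proof.
  intros Hk Hf Hg f0 Hgf Hfg Hflat i Hi2 Hi.
  apply (flat_upto_of_tangent_contact i g (Ck_Fin k i g Hg Hi)); [| lia].
  apply (tangent_contact_inverse i f g f0 Hgf Hfg
    (Ck_ex_derive k f 0 Hk Hf) (Ck_ex_derive k g 0 Hk Hg)).
  apply (tangent_contact_of_flat_upto i f Hi2 (Ck_Fin k i f Hf Hi)).
  intros m Hm. apply Hflat; [lia | exact (le_k_trans m i k (proj2 Hm) Hi)].
Qed.

Lemma pow_neq_1 a n : 0 < a -> a <> 1 -> n <> 0%nat -> a ^ n <> 1.
Proof.
  intros Ha Ha1 Hn E. destruct (pow_R1 a n E) as [Habs | Hn0]; [| contradiction].
  rewrite Rabs_pos_eq in Habs; lra.
Qed.

Lemma glue_rescale_Derive_n_0 k h f c1 d1 c2 d2 i : Ck k h -> Ck k f ->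
  (forall x, h x = glue (rescale c1 d1 f) (rescale c2 d2 f) x) -> le_k i k ->
  Derive_n h i 0 = c1 * d1 ^ i * Derive_n f i 0 /\ Derive_n h i 0 = c2 * d2 ^ i * Derive_n f i 0.
Proof.
  intros Hh Hf Hglue Hi. split.
  - rewrite (Derive_n_0_agree_left k h (rescale c1 d1 f) i Hh (Ck_rescale k f c1 d1 Hf) Hi).
    + rewrite (Derive_n_rescale k), Rmult_0_r by assumption. reflexivity.
    + intros t Ht. rewrite Hglue, glue_l by lra. reflexivity.
  - rewrite (Derive_n_0_agree_right k h (rescale c2 d2 f) i Hh (Ck_rescale k f c2 d2 Hf) Hi).
    + rewrite (Derive_n_rescale k), Rmult_0_r by assumption. reflexivity.
    + intros t Ht. rewrite Hglue, glue_r by lra. reflexivity.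
Qed.

Lemma glue_rescale_slope k h f c1 d1 c2 d2 : valid_smoothness k -> Ck k h -> Ck k f ->
  Derive f 0 <> 0 -> (forall x, h x = glue (rescale c1 d1 f) (rescale c2 d2 f) x) ->
  c1 * d1 = c2 * d2.
Proof.
  intros Hk Hh Hf Hf' Hglue.
  destruct (glue_rescale_Derive_n_0 k h f c1 d1 c2 d2 1 Hh Hf Hglue (le_k_1 k Hk)) as [E1 E2].
  apply (Rmult_eq_reg_r (Derive f 0)); [| exact Hf'].
  rewrite <- (pow_1 d1), <- (pow_1 d2). change (Derive f 0) with (Derive_n f 1 0). congruence.
Qed.

Lemma glue_rescale_flat k h f c1 d1 c2 d2 : Ck k h -> Ck k f ->
  (forall x, h x = glue (rescale c1 d1 f) (rescale c2 d2 f) x) ->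
  (forall i, (2 <= i)%nat -> c1 * d1 ^ i <> c2 * d2 ^ i) -> flat k h.
Proof.
  intros Hh Hf Hglue Hne i Hi2 Hi.
  destruct (glue_rescale_Derive_n_0 k h f c1 d1 c2 d2 i Hh Hf Hglue Hi) as [E1 E2].
  assert (Hfi : Derive_n f i 0 = 0).
  { apply (Rmult_eq_reg_l (c1 * d1 ^ i - c2 * d2 ^ i)); [lra |].
    specialize (Hne i Hi2). lra. }
  rewrite E1, Hfi. ring.
Qed.

Lemma in_wDw_cases k a b h : valid_smoothness k -> 0 < a -> 0 < b -> a <> 1 ->
  Dk k h -> in_wDw k b a h ->
  flat k h /\ (a * b = 1 /\ orientation_preserving h \/ a = b /\ orientation_reversing h).
Proof.
  intros Hk Ha Hb Ha1 [[Ch _] _] [f [Hf ->]].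
  pose proof (proj1 (proj1 Hf)) as Cf.
  assert (Hf' := Dk_Derive_neq_0 k f 0 Hk Hf).
  destruct (Dk_monotone k f Hk Hf) as [Hinc | Hdec].
  - assert (Hglue := fun x => w_conj_preserving f b a x (proj2 Hf) Hinc Ha).
    assert (Hab : a * b = 1)
      by (assert (H := glue_rescale_slope k _ f 1 1 b a Hk Ch Cf Hf' Hglue); lra).
    split; [| left; split; [exact Hab |]].
    + apply (glue_rescale_flat k _ f 1 1 b a Ch Cf Hglue). intros [|i] Hi; [lia |].
      rewrite pow1, <- tech_pow_Rmult, <- Rmult_assoc, (Rmult_comm b), Hab, !Rmult_1_l.
      apply not_eq_sym, pow_neq_1; [exact Ha | exact Ha1 | lia].
    + intros x y Hxy. apply (w_increasing b Hb), Hinc, (w_increasing a Ha), Hxy.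
  - assert (Hglue := fun x => w_conj_reversing f b a x (proj2 Hf) Hdec Ha).
    assert (Hab : a = b)
      by (assert (H := glue_rescale_slope k _ f b 1 1 a Hk Ch Cf Hf' Hglue); lra).
    split; [| right; split; [exact Hab |]].
    + apply (glue_rescale_flat k _ f b 1 1 a Ch Cf Hglue). intros [|i] Hi; [lia |].
      rewrite pow1, <- tech_pow_Rmult, <- Hab, Rmult_1_r, Rmult_1_l. intros E.
      apply (pow_neq_1 a i Ha Ha1); [lia |]. apply (Rmult_eq_reg_l a); lra.
    + intros x y Hxy. apply (w_increasing b Hb), Hdec, (w_increasing a Ha), Hxy.
Qed.

Lemma Ck_glue_rescale k p c1 d1 c2 d2 : Ck k p -> p 0 = 0 -> flat k p -> c1 * d1 = c2 * d2 ->
  Ck k (glue (rescale c1 d1 p) (rescale c2 d2 p)).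
Proof.
  intros Hp p0 Hflat Hcd. apply glue_Ck; [apply Ck_rescale, Hp .. |].
  intros i Hi. rewrite !(Derive_n_rescale k), !Rmult_0_r by assumption.
  destruct i as [|[|i]].
  - simpl. rewrite p0. ring.
  - simpl. rewrite !Rmult_1_r, Hcd. reflexivity.
  - rewrite Hflat by (auto; lia). ring.
Qed.

Lemma Ck_w_conj k p c d : Ck k p -> p 0 = 0 -> flat k p -> 0 < d ->
  (orientation_preserving p /\ c * d = 1 \/ orientation_reversing p /\ c = d) ->
  Ck k (fun x => w c (p (w d x))).
Proof.
  intros Hp p0 Hflat Hd [[Hinc Hcd] | [Hdec Hcd]].
  - rewrite (functional_extensionality _ _ (fun x => w_conj_preserving p c d x p0 Hinc Hd)).
    apply Ck_glue_rescale; [exact Hp | exact p0 | exact Hflat | lra].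
  - rewrite (functional_extensionality _ _ (fun x => w_conj_reversing p c d x p0 Hdec Hd)).
    apply Ck_glue_rescale; [exact Hp | exact p0 | exact Hflat | lra].
Qed.

Lemma inverse_preserving h g : orientation_preserving h -> (forall y, h (g y) = y) ->
  orientation_preserving g.
Proof.
  intros Hh Hhg x y Hxy.
  destruct (Rtotal_order (g x) (g y)) as [H | [H | H]]; [exact H | exfalso ..].
  - apply (f_equal h) in H. rewrite !Hhg in H. lra.
  - apply Hh in H. rewrite !Hhg in H. lra.
Qed.

Lemma inverse_reversing h g : orientation_reversing h -> (forall y, h (g y) = y) ->
  orientation_reversing g.
Proof.
  intros Hh Hhg x y Hxy.
  destruct (Rtotal_order (g x) (g y)) as [H | [H | H]]; [exfalso .. | exact H].
  - apply Hh in H. rewrite !Hhg in H. lra.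
  - apply (f_equal h) in H. rewrite !Hhg in H. lra.
Qed.

Lemma in_wDw_of_w_conj k a b h g : 0 < a -> 0 < b -> Dk k h ->
  (forall x, g (h x) = x) -> (forall y, h (g y) = y) ->
  Ck k (fun x => w (/ b) (h (w (/ a) x))) -> Ck k (fun y => w a (g (w b y))) -> in_wDw k b a h.
Proof.
  intros Ha Hb [[Ch _] h0] Hgh Hhg Cf Cf'.
  assert (Hw : forall c t, 0 < c -> w c (w (/ c) t) = t).
  { intros c t Hc. rewrite <- (Rinv_inv c) at 1. apply w_inv, Rinv_0_lt_compat, Hc. }
  exists (fun x => w (/ b) (h (w (/ a) x))). split; [split; [split; [exact Cf |] |] |].
  - exists (fun y => w a (g (w b y))). split; [| split; [| exact Cf']]; intros x.
    + rewrite Hw, Hgh, Hw by assumption. reflexivity.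
    + rewrite w_inv, Hhg, w_inv by assumption. reflexivity.
  - rewrite (w_l (/ a) 0), h0, w_l; lra.
  - apply functional_extensionality. intros x. rewrite Hw, w_inv by assumption. reflexivity.
Qed.

Lemma in_wDw_of_Ek k a b h : valid_smoothness k -> 0 < a -> 0 < b ->
  (a * b = 1 /\ orientation_preserving h \/ a = b /\ orientation_reversing h) ->
  Ek k h -> in_wDw k b a h.
Proof.
  intros Hk Ha Hb Hcase [Hh Hflat]. pose proof Hh as [[Ch [g [Hgh [Hhg Cg]]]] h0].
  assert (g0 : g 0 = 0) by (rewrite <- h0 at 1; apply Hgh).
  assert (Hflatg := flat_inverse k h g Hk Ch Cg h0 Hgh Hhg Hflat).
  apply (in_wDw_of_w_conj k a b h g Ha Hb Hh Hgh Hhg).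
  - apply Ck_w_conj; [exact Ch | exact h0 | exact Hflat | apply Rinv_0_lt_compat, Ha |].
    destruct Hcase as [[Hab Hinc] | [Hab Hdec]]; [left | right]; split; try assumption.
    + rewrite <- Rinv_mult, Rmult_comm, Hab. apply Rinv_1.
    + rewrite Hab. reflexivity.
  - apply Ck_w_conj; [exact Cg | exact g0 | exact Hflatg | exact Hb |].
    destruct Hcase as [[Hab Hinc] | [Hab Hdec]]; [left | right]; split; try assumption.
    + exact (inverse_preserving h g Hinc Hhg).
    + exact (inverse_reversing h g Hdec Hhg).
Qed.

Lemma Dk_in_wDw_iff k a b h : valid_smoothness k -> 0 < a -> 0 < b -> a <> 1 ->
  Dk k h /\ in_wDw k b a h <->
  Ek k h /\ (a * b = 1 /\ orientation_preserving h \/ a = b /\ orientation_reversing h).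
Proof.
  intros Hk Ha Hb Ha1. split.
  - intros [Hh Hin]. destruct (in_wDw_cases k a b h Hk Ha Hb Ha1 Hh Hin) as [Hflat Hcase].
    exact (conj (conj Hh Hflat) Hcase).
  - intros [He Hcase]. exact (conj (proj1 He) (in_wDw_of_Ek k a b h Hk Ha Hb Hcase He)).
Qed.

Theorem corollary5p17 (k : smoothness) (a b : R) :
  valid_smoothness k -> 0 < a -> 0 < b -> a <> 1 -> b <> 1 ->
  ((a <> b -> a <> / b -> forall h : R -> R, ~ (Dk k h /\ in_wDw k b a h)) /\
   (a * b = 1 -> forall h : R -> R, (Dk k h /\ in_wDw k b a h) <-> Ek_plus k h) /\
   (a = b -> forall h : R -> R, (Dk k h /\ in_wDw k b a h) <-> Ek_minus k h)).
Proof.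
  intros Hk Ha Hb Ha1 _.
  pose proof (fun h => Dk_in_wDw_iff k a b h Hk Ha Hb Ha1) as Hiff.
  assert (Hexcl : a * b = 1 -> a = b -> False) by (intros Hab <-; apply Ha1; nra).
  split; [| split].
  - intros Hab Hab' h Hin. apply Hiff in Hin as [_ [[E _] | [E _]]]; [| contradiction].
    apply Hab', (Rmult_eq_reg_r b); [rewrite Rinv_l; lra | lra].
  - intros Hab h. rewrite Hiff. unfold Ek_plus.
    split; [intros [He [[_ Hp] | [E _]]] | tauto]; [tauto | contradiction (Hexcl Hab E)].
  - intros Hab h. rewrite Hiff. unfold Ek_minus.
    split; [intros [He [[E _] | [_ Hp]]] | tauto]; [contradiction (Hexcl E Hab) | tauto].
Qed.
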